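(* Let $\psi_u\in(0,2\pi)$ satisfy $t\mu\notin\mathbb Z$, where $t=\frac34-\frac{\psi_u}{2\pi}$, and let $\psi_{\tilde u}\in\mathbb R$ be arbitrary. Then $$Y_{\tilde u}=\frac{\zeta_{\tilde u}\sin^2\!\big(\psi_{\tilde u}-\frac{\pi}{\mu}+\frac{2\pi}{\mu}\lceil t\mu\rceil\big)}{V^2},\qquad V=\frac{\sin(\pi/\mu)}{W}.$$
   Context: Setup: Let $W\ge 1$ be an integer and $\mu\ge 2$ an even integer, and set $K=\mu W+1$. Let $\zeta_u>0$, $\psi_u\in(0,2\pi)$, and for $k=1,\dots,K$ let $h_{u,k}=\zeta_u^{1/2}e^{j(\psi_u+2\pi(k-1)/\mu)}$, where $j=\sqrt{-1}$. Let $\mathcal K_1=\{k\in\{2,\dots,K\}:\operatorname{Re}(h_{u,k})>0\}$. For an interfering user $\tilde u$ with $\zeta_{\tilde u}>0$ and phase $\psi_{\tilde u}$, let $h_{\tilde u,k}=\zeta_{\tilde u}^{1/2}e^{j(\psi_{\tilde u}+2\pi(k-1)/\mu)}$ and $Y_{\tilde u}=\big(\sum_{k\in\mathcal K_1}\operatorname{Re}(h_{\tilde u,k})\big)^2$. *)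

From mathcomp Require Import all_boot all_order all_algebra.
From mathcomp Require Import all_classical all_reals all_analysis.
Set Implicit Arguments. Unset Strict Implicit. Unset Printing Implicit Defensive.
Import Order.TTheory GRing.Theory Num.Theory.
Local Open Scope ring_scope.

(* Real part of h_{.,k} = zeta^{1/2} e^{j(psi + 2 pi (k-1)/mu)},
   i.e. zeta^{1/2} cos(psi + 2 pi (k-1)/mu). *)
Definition Reh (R : realType) (mu : nat) (zeta psi : R) (k : nat) : R :=
  Num.sqrt zeta * cos (psi + 2 * pi * (k.-1)%:R / mu%:R).

Definition Kdim (mu W : nat) : nat := (mu * W + 1)%N.

Definition inK1 (R : realType) (mu W : nat) (zeta_u psi_u : R) (k : nat) : bool :=
  (2 <= k <= Kdim mu W)%N && (0 < Reh mu zeta_u psi_u k).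

Definition Ytil (R : realType) (mu W : nat) (zeta_u psi_u zeta_t psi_t : R) : R :=
  (\sum_(0 <= k < (Kdim mu W).+1 | inK1 mu W zeta_u psi_u k) Reh mu zeta_t psi_t k) ^+ 2.

From mathcomp Require Import all_boot all_order all_algebra.
From mathcomp Require Import all_classical all_reals all_analysis.
From mathcomp Require Import ring lra zify.
Set Implicit Arguments. Unset Strict Implicit. Unset Printing Implicit Defensive.
Import Order.TTheory GRing.Theory Num.Theory.
Local Open Scope ring_scope.

(* Whether Re h_{u,k} > 0 depends only on k mod mu, and in each period exactly
   mu/2 consecutive phases psi_u + (k-1) 2pi/mu lie in (-pi/2, pi/2); the
   hypothesis t mu \notin Z excludes a zero of the cosine, and the first of these
   phases has k - 1 = ceil(t mu) modulo mu.  So the sum over K_1 is W copies of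
   a sum of mu/2 consecutive cosines of the interfering phases, which telescopes
   to -sin(psi_~u - pi/mu + (2pi/mu) ceil(t mu)) / sin(pi/mu). *)

Lemma sum_periodic_shift (V : zmodType) (h : nat -> V) p s :
  (forall m, h (m + p)%N = h m) ->
  \sum_(0 <= i < p) h (s + i)%N = \sum_(0 <= i < p) h i.
Proof.
move=> h_per; elim: s => [|s IH]; first by [].
rewrite -{}IH; apply: (addrI (h s)).
have E : \sum_(0 <= i < p.+1) h (s + i)%N = \sum_(0 <= i < p) h (s + i)%N + h s.
  by rewrite big_nat_recr //= h_per.
rewrite big_nat_recl //= addn0 in E.
rewrite [RHS]addrC -E; congr (_ + _).
by apply: eq_big_nat => i _; rewrite addnS addSn.
Qed.

Lemma sum_periodic_mul (V : zmodType) (h : nat -> V) p W s :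
  (forall m, h (m + p)%N = h m) ->
  \sum_(0 <= i < p * W) h (s + i)%N = (\sum_(0 <= i < p) h i) *+ W.
Proof.
move=> h_per; elim: W => [|W IH]; first by rewrite muln0 big_geq.
rewrite mulnS addnC (big_cat_nat _ (leq_addr _ _)) //= IH mulrSr; congr (_ + _).
rewrite -{1}(add0n (p * W)%N) big_addn addKn.
under eq_big_nat => i _ do rewrite [(i + _)%N]addnC addnA.
exact: sum_periodic_shift.
Qed.

Lemma sum_cos_arith_telescope (R : realType) (phi d : R) n :
  2 * sin (d / 2) * \sum_(0 <= j < n) cos (phi + j%:R * d) =
  sin (phi + n%:R * d - d / 2) - sin (phi - d / 2).
Proof.
elim: n => [|n IH]; first by rewrite big_geq // mulr0 mul0r addr0 subrr.
rewrite big_nat_recr //= mulrDr IH.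
have -> : phi + n.+1%:R * d - d / 2 = (phi + n%:R * d) + d / 2.
  by rewrite -addn1 natrD; field.
rewrite (sinD _ (d / 2)) (sinB _ (d / 2)); ring.
Qed.

Lemma sum_cos_half_turn (R : realType) (phi d : R) n :
  n%:R * d = pi -> sin (d / 2) != 0 ->
  \sum_(0 <= j < n) cos (phi + j%:R * d) = - sin (phi - d / 2) / sin (d / 2).
Proof.
move=> nd sd_neq0.
have sd2_neq0 : 2 * sin (d / 2) != 0 by rewrite mulf_neq0 ?pnatr_eq0.
apply: (mulfI sd2_neq0); rewrite sum_cos_arith_telescope nd.
have -> : phi + pi - d / 2 = (phi - d / 2) + pi by ring.
by rewrite sinDpi; field.
Qed.

Lemma cos_gt0_window (R : realType) n (d z : R) i :
  0 < d -> n%:R * d = pi -> - (pi / 2) < z < - (pi / 2) + d -> (i < n.*2)%N ->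
  (0 < cos (z + i%:R * d)) = (i < n)%N.
Proof.
move=> d_gt0 nd /andP[z_gt z_lt] i_lt.
have id_ge0 : 0 <= i%:R * d by rewrite mulr_ge0 // ltW.
have iSd : i.+1%:R * d = i%:R * d + d by rewrite -addn1 natrD mulrDl mul1r.
case: ltnP => [i_lt_n | n_le_i].
  apply: cos_gt0_pihalf.
  have : i.+1%:R * d <= n%:R * d by rewrite ler_pM2r // ler_nat.
  by rewrite nd iSd => ?; apply/andP; split; lra.
apply/negbTE; rewrite -leNgt -[z + _](subrK pi) cosDpi oppr_le0 ltW //.
apply: cos_gt0_pihalf.
have : n%:R * d <= i%:R * d by rewrite ler_pM2r // ler_nat.
have : i.+1%:R * d <= n.*2%:R * d by rewrite ler_pM2r // ler_nat.
rewrite -muln2 natrM mulrAC nd iSd => ? ?; apply/andP; split; lra.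
Qed.

Lemma sum_cos_gt0_half (V : nmodType) (R : realType) n (d z : R) (F : nat -> V) :
  0 < d -> n%:R * d = pi -> - (pi / 2) < z < - (pi / 2) + d ->
  \sum_(0 <= i < n.*2 | 0 < cos (z + i%:R * d)) F i = \sum_(0 <= i < n) F i.
Proof.
move=> d_gt0 nd z_win.
have win i : (i < n.*2)%N -> (0 < cos (z + i%:R * d)) = (i < n)%N.
  exact: cos_gt0_window.
rewrite big_mkcond -addnn (big_cat_nat _ (leq_addr n n)) //=.
rewrite [X in _ + X]big_nat_cond [X in _ + X]big1 ?addr0 => [|i].
  by apply: eq_big_nat => i /andP[_ i_lt]; rewrite win ?i_lt // -addnn ltn_addr.
case/andP=> /andP[n_le_i i_lt] _.
by rewrite win -?addnn // ltnNge n_le_i.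
Qed.

(* [ceil x * d] overshoots [x * d = 3 pi / 2 - psi] by less than one step [d]. *)
Lemma ceil_phase_window (R : realType) (mu : nat) (d psi : R) :
  0 < d -> mu%:R * d = 2 * pi ->
  (forall z : int, (3 / 4 - psi / (2 * pi)) * mu%:R != z%:~R) ->
  - (pi / 2) < psi + d * (Num.ceil ((3 / 4 - psi / (2 * pi)) * mu%:R))%:~R - 2 * pi
    < - (pi / 2) + d.
Proof.
move=> d_gt0 mud x_notint; set x := _ * mu%:R; set C := (Num.ceil x)%:~R.
have two_pi_neq0 : 2 * pi != 0 :> R by rewrite gt_eqF ?mulr_gt0 ?pi_gt0.
have xd : x * d = 3 * pi / 2 - psi by rewrite /x -mulrA mud mulrBl divfK //; field.
have /andP[C_gt C_ge] := ceil_itv x; rewrite intrD -/C in C_gt.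
have x_lt : x < C by rewrite lt_neqAle C_ge andbT x_notint.
have : x * d < C * d by rewrite ltr_pM2r.
have : (C - 1) * d < x * d by rewrite ltr_pM2r.
rewrite xd => ? ?; apply/andP; split; lra.
Qed.

(* Adding [mu] makes the shift a natural number at the cost of one full turn. *)
Lemma ceil_phase_shift (R : realType) mu (d psi : R) :
  0 < d -> mu%:R * d = 2 * pi -> psi < 2 * pi ->
  (forall z : int, (3 / 4 - psi / (2 * pi)) * mu%:R != z%:~R) ->
  exists a : nat,
    a%:R = (Num.ceil ((3 / 4 - psi / (2 * pi)) * mu%:R))%:~R + mu%:R :> R /\
    - (pi / 2) < psi + a%:R * d - (pi *+ 2) *+ 2 < - (pi / 2) + d.
Proof.
move=> d_gt0 mud psi_lt x_notint.
have := ceil_phase_window d_gt0 mud x_notint; set c := Num.ceil _ => win.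
have mu_gt0 : 0 < mu%:R :> R by rewrite -(pmulr_lgt0 _ d_gt0) mud mulr_gt0 ?pi_gt0.
have c_gt : (- mu%:Z < c)%R.
  have q_lt1 : psi / (2 * pi) < 1 by rewrite ltr_pdivrMr ?mul1r // mulr_gt0 ?pi_gt0.
  by rewrite ceil_gt_int mulrNz; nra.
have a_eq : (absz (c + mu%:Z))%:R = c%:~R + mu%:R :> R.
  by rewrite -[LHS]/((absz (c + mu%:Z))%:Z%:~R) gez0_abs ?intrD //; lia.
exists (absz (c + mu%:Z)); split => //.
rewrite a_eq (mulrDl _ _ d) mud.
have -> : psi + (c%:~R * d + 2 * pi) - (pi *+ 2) *+ 2 = psi + d * c%:~R - 2 * pi.
  by ring.
exact: win.
Qed.

Lemma Reh_succE (R : realType) mu (zeta psi : R) m :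
  Reh mu zeta psi m.+1 = Num.sqrt zeta * cos (psi + m%:R * (2 * pi / mu%:R)).
Proof. by rewrite /Reh /= mulrCA mulrA. Qed.

Lemma Reh_periodic (R : realType) mu (zeta psi : R) m :
  (0 < mu)%N -> Reh mu zeta psi (m + mu).+1 = Reh mu zeta psi m.+1.
Proof.
move=> mu_gt0; rewrite !Reh_succE natrD mulrDl [mu%:R * _]mulrC divfK.
  by rewrite addrA (mulr_natl pi 2) cosD2pi.
by rewrite pnatr_eq0 -lt0n.
Qed.

Lemma sum_inK1 (R : realType) mu W (zeta psi : R) (F : nat -> R) :
  \sum_(0 <= k < (Kdim mu W).+1 | inK1 mu W zeta psi k) F k =
  \sum_(0 <= i < mu * W) (if 0 < Reh mu zeta psi i.+2 then F i.+2 else 0).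
Proof.
rewrite big_mkcond /inK1 /Kdim addn1 !big_nat_recl //= !add0r.
by apply: eq_big_nat => i /andP[_ i_lt]; rewrite ltnS i_lt.
Qed.

(* Term [k = m + 1] of the sum defining [Ytil], set to zero when [k] is not in K_1. *)
Definition Reh_masked (R : realType) mu (zeta_u psi_u zeta psi : R) (m : nat) : R :=
  if 0 < Reh mu zeta_u psi_u m.+1 then Reh mu zeta psi m.+1 else 0.

Lemma Reh_masked_periodic (R : realType) mu (zeta_u psi_u zeta psi : R) m :
  (0 < mu)%N ->
  Reh_masked mu zeta_u psi_u zeta psi (m + mu) = Reh_masked mu zeta_u psi_u zeta psi m.
Proof. by move=> mu_gt0; rewrite /Reh_masked !Reh_periodic. Qed.

Lemma Ytil_periodic_sum (R : realType) mu W (zeta_u psi_u zeta psi : R) :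
  (0 < mu)%N ->
  Ytil mu W zeta_u psi_u zeta psi =
    ((\sum_(0 <= i < mu) Reh_masked mu zeta_u psi_u zeta psi i) *+ W) ^+ 2.
Proof.
move=> mu_gt0; have per m := Reh_masked_periodic zeta_u psi_u zeta psi m mu_gt0.
by congr (_ ^+ 2); exact: etrans (sum_inK1 _ _ _ _ _) (sum_periodic_mul W 1 per).
Qed.

Section HalfPeriod.

Variables (R : realType) (n : nat).
Hypothesis n_gt0 : (0 < n)%N.
Let d : R := 2 * pi / n.*2%:R.

Lemma double_mul_step : n.*2%:R * d = 2 * pi.
Proof. by rewrite mulrC divfK // pnatr_eq0 double_eq0 -lt0n. Qed.

Lemma mul_step : n%:R * d = pi.
Proof.
have n_neq0 : n%:R != 0 :> R by rewrite pnatr_eq0 -lt0n.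
by rewrite /d -mul2n natrM; field.
Qed.

Lemma half_step : pi / n.*2%:R = d / 2.
Proof.
have n_neq0 : n.*2%:R != 0 :> R by rewrite pnatr_eq0 double_eq0 -lt0n.
by rewrite /d; field.
Qed.

Lemma step_gt0 : 0 < d.
Proof. by rewrite divr_gt0 ?mulr_gt0 ?pi_gt0 // ltr0n double_gt0. Qed.

Lemma sin_half_step_gt0 : 0 < sin (d / 2).
Proof.
have n_ge1 : 1 <= n%:R :> R by rewrite ler1n.
have := mul_step; have := step_gt0 => d_gt0 nd.
by rewrite sin_gt0_pi // divr_gt0 //=; nra.
Qed.

Lemma sum_Reh_masked_period (zeta_u psi_u zeta psi : R) (a k : nat) :
  0 < zeta_u ->
  - (pi / 2) < psi_u + a%:R * d - (pi *+ 2) *+ k < - (pi / 2) + d ->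
  \sum_(0 <= i < n.*2) Reh_masked n.*2 zeta_u psi_u zeta psi i =
    Num.sqrt zeta * \sum_(0 <= j < n) cos (psi + a%:R * d + j%:R * d).
Proof.
move=> zu_gt0 z_win.
have mu_gt0 : (0 < n.*2)%N by rewrite double_gt0.
have per m := Reh_masked_periodic zeta_u psi_u zeta psi m mu_gt0.
rewrite -(sum_periodic_shift a per) -(sum_cos_gt0_half _ step_gt0 mul_step z_win).
rewrite [X in _ * X]big_mkcond mulr_sumr; apply: eq_big_nat => i _.
rewrite /Reh_masked !Reh_succE pmulr_rgt0 ?sqrtr_gt0 // -/d.
have -> : psi_u + (a + i)%:R * d =
          psi_u + a%:R * d - (pi *+ 2) *+ k + i%:R * d + (pi *+ 2) *+ k.
  by rewrite natrD (mulrDl _ _ d); ring.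
rewrite (periodicn (@cosD2pi R)) natrD (mulrDl _ _ d) addrA.
by case: ifP => _; rewrite ?mulr0.
Qed.

End HalfPeriod.

Theorem theorem3 (R : realType) (W mu : nat) (zeta_u psi_u zeta_t psi_t : R) :
  (1 <= W)%N -> (2 <= mu)%N -> ~~ odd mu ->
  0 < zeta_u -> 0 < psi_u < 2 * pi -> 0 < zeta_t ->
  (forall z : int, (3 / 4 - psi_u / (2 * pi)) * mu%:R != z%:~R) ->
  Ytil mu W zeta_u psi_u zeta_t psi_t =
    zeta_t * (sin (psi_t - pi / mu%:R
                   + 2 * pi / mu%:R * (Num.ceil ((3 / 4 - psi_u / (2 * pi)) * mu%:R))%:~R)) ^+ 2
    / (sin (pi / mu%:R) / W%:R) ^+ 2.
Proof.
move=> W_gt0 mu_ge2 mu_even zu_gt0 /andP[_ psi_u_lt] zt_gt0 x_notint.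
have [n mu_eq] : exists n, mu = n.*2.
  by exists mu./2; rewrite -[LHS]odd_double_half (negbTE mu_even).
have n_gt0 : (0 < n)%N by rewrite -double_gt0 -mu_eq ltnW.
subst mu; set d := 2 * pi / n.*2%:R.
have [a [aC a_win]] := ceil_phase_shift (step_gt0 R n_gt0) (double_mul_step R n_gt0)
  psi_u_lt x_notint.
set C := (Num.ceil _)%:~R in aC *.
rewrite Ytil_periodic_sum ?double_gt0 // (sum_Reh_masked_period n_gt0 _ _ zu_gt0 a_win).
rewrite sum_cos_half_turn ?mul_step ?gt_eqF ?sin_half_step_gt0 // half_step //.
have -> : psi_t + a%:R * d - d / 2 = psi_t - d / 2 + d * C + pi *+ 2.
  by rewrite aC (mulrDl _ _ d) double_mul_step //; ring.
rewrite sinD2pi -(mulr_natr (_ * _) W) !exprMn sqr_sqrtr ?ltW //.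
by field; rewrite pnatr_eq0 -lt0n W_gt0 gt_eqF ?sin_half_step_gt0.
Qed.
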